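(* Let $\mathcal{G}=(\mathcal{V},\mathcal{E})$ be connected, $c\in\mathbb{R}^n$, and $D(y)=-(\mathbf{A}c)^\top y-\tfrac12\|\mathbf{A}^\top y\|^2$ for $y\in\mathbb{R}^m$, with $y^*$ any maximizer of $D$. Let $y^0=0$ and, for $t\ge0$, choose an edge $e\in\mathcal{E}$ uniformly at random (independently across iterations) and set $y^{t+1}=y^t+\lambda^tf_e$ with $\lambda^t=\arg\max_{\lambda\in\mathbb{R}}D(y^t+\lambda f_e)$. (Equivalently, with $x^t=c+\mathbf{A}^\top y^t$, the values at the endpoints of $e$ are replaced by their average.) Then for all $k\ge0$ $$\mathbb{E}[D(y^* )-D(y^k)]\le\Big(1-\frac{\alpha(\mathcal{G})}{2m}\Big)^k\big[D(y^* )-D(y^0)\big].$$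
   Context: $\mathcal{G}$ has $n$ vertices $\mathcal{V}=\{1,\dots,n\}$ and $m=|\mathcal{E}|$ edges. $\mathbf{A}\in\mathbb{R}^{m\times n}$ has, for each edge $e=(i,j)$ (fixed orientation), a row with $1$ in column $i$, $-1$ in column $j$ and zeros elsewhere; $f_e\in\mathbb{R}^m$ is the unit basis vector of edge $e$. The algebraic connectivity $\alpha(\mathcal{G})$ is the second smallest eigenvalue of the Laplacian $\mathbf{L}=\mathbf{A}^\top\mathbf{A}$. $\|\cdot\|$ is the Euclidean norm. *)

From HB Require Import structures.
From mathcomp Require Import all_boot all_order all_algebra.
Set Implicit Arguments. Unset Strict Implicit. Unset Printing Implicit Defensive.
Import Order.TTheory GRing.Theory Num.Theory.
Local Open Scope ring_scope.

(* A graph on vertices 'I_n with m edges; edge e is the oriented pair E e = (i, j). *)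

Definition simple_graph (n m : nat) (E : 'I_m -> 'I_n * 'I_n) : Prop :=
  (forall e, (E e).1 <> (E e).2) /\
  (forall e e', (E e = E e' \/ E e = ((E e').2, (E e').1)) -> e = e').

Definition adj (n m : nat) (E : 'I_m -> 'I_n * 'I_n) : rel 'I_n :=
  fun u v => [exists e, (E e == (u, v)) || (E e == (v, u))].

Definition connected_graph (n m : nat) (E : 'I_m -> 'I_n * 'I_n) : Prop :=
  forall u v : 'I_n, connect (adj E) u v.

Definition incidence (R : pzRingType) (n m : nat) (E : 'I_m -> 'I_n * 'I_n)
  : 'M[R]_(m, n) :=
  \matrix_(e < m, i < n)
    (if i == (E e).1 then 1 else if i == (E e).2 then -1 else 0).

Definition laplacian (R : comPzRingType) (n m : nat) (E : 'I_m -> 'I_n * 'I_n)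
  : 'M[R]_n := (incidence R E)^T *m incidence R E.

Definition sorted_eigenvalues (R : numFieldType) (n : nat) (M : 'M[R]_n)
  (s : seq R) : Prop :=
  sorted <=%R s /\ char_poly M = \prod_(x <- s) ('X - x%:P).

Definition second_smallest_eigenvalue (R : numFieldType) (n : nat)
  (M : 'M[R]_n) (a : R) : Prop :=
  exists s, sorted_eigenvalues M s /\ a = nth 0 s 1.

Definition algebraic_connectivity (R : numFieldType) (n m : nat)
  (E : 'I_m -> 'I_n * 'I_n) (a : R) : Prop :=
  second_smallest_eigenvalue (laplacian R E) a.

Definition sqnorm (R : pzRingType) (p : nat) (v : 'cV[R]_p) : R :=
  \sum_(i < p) v i 0 ^+ 2.

Definition unitv (R : pzRingType) (m : nat) (e : 'I_m) : 'cV[R]_m :=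
  \col_(i < m) (if i == e then 1 else 0).

Definition Dual (R : numFieldType) (n m : nat) (E : 'I_m -> 'I_n * 'I_n)
  (c : 'cV[R]_n) (y : 'cV[R]_m) : R :=
  - ((incidence R E *m c)^T *m y) 0 0
  - 2^-1 * sqnorm ((incidence R E)^T *m y).

(* Y maps each history of chosen edges (first chosen first) to the iterate y^t:
   y^0 = 0, and y^{t+1} = y^t + lambda f_e with lambda a maximizer of
   lambda |-> D(y^t + lambda f_e). *)
Definition rcd_iterates (R : numFieldType) (n m : nat) (E : 'I_m -> 'I_n * 'I_n)
  (c : 'cV[R]_n) (Y : seq 'I_m -> 'cV[R]_m) : Prop :=
  Y [::] = 0 /\
  forall (s : seq 'I_m) (e : 'I_m), exists lam : R,
    Y (rcons s e) = Y s + lam *: unitv R e /\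
    forall mu : R, Dual E c (Y s + mu *: unitv R e) <= Dual E c (Y s + lam *: unitv R e).

From HB Require Import structures.
From mathcomp Require Import all_boot all_order all_algebra.
From mathcomp Require Import complex spectral.
From mathcomp Require Import ring lra.
Set Implicit Arguments. Unset Strict Implicit. Unset Printing Implicit Defensive.
Import Order.TTheory GRing.Theory Num.Theory.
Local Open Scope ring_scope.

(* With x = c + A^T y one has D(y) = (|c|^2 - |x|^2) / 2, and the exact line
   search along the edge e = (i, j) averages x_i and x_j, raising D by
   (x_i - x_j)^2 / 4.  Averaged over the m edges, one step gains |A x|^2 / (4 m).
   The line search preserves the entry sum S of x, so the optimal value is at
   most (|c|^2 - S^2/n) / 2 and twice the optimality gap is at most
   |x - (S/n) 1|^2.  That vector is orthogonal to the kernel vector 1 of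
   L = A^T A, so the Rayleigh bound for the second eigenvalue gives
   alpha |x - (S/n) 1|^2 <= |A x|^2, i.e. the expected gap contracts by the
   factor 1 - alpha/(2m) at each step.  The Rayleigh bound is proved by
   diagonalising L over R[i]: at most one eigenvalue lies below alpha, and the
   image of 1 in the eigenbasis must be supported on it. *)

Lemma char_poly_conj (F : fieldType) n (P M : 'M[F]_n) : P \in unitmx ->
  char_poly (invmx P *m M *m P) = char_poly M.
Proof.
move=> Pu; rewrite /char_poly /char_poly_mx.
set P' := map_mx polyC P.
have P'u : P' \in unitmx by rewrite map_unitmx.
rewrite !map_mxM map_invmx -/P'.
have XP : ('X%:M : 'M[{poly F}]_n) = invmx P' *m 'X%:M *m P'.
  by rewrite -mulmxA -scalar_mxC mulmxA mulVmx // mul1mx.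
rewrite {1}XP -mulmxBl -mulmxBr !det_mulmx mulrC mulrA -det_mulmx mulmxV //.
by rewrite det1 mul1r.
Qed.

Lemma count_lt_second_sorted (R : numDomainType) (s : seq R) :
  sorted <=%R s -> (count (< nth 0 s 1)%R s <= 1)%N.
Proof.
case: s => [//|a [|b t]] /=; first by rewrite addn0 leq_b1.
move=> /andP[_ /(order_path_min le_trans) b_min]; rewrite ltxx /=.
rewrite (@eq_in_count _ _ pred0) ?count_pred0; first by case: (a < b).
by move=> y /(allP b_min) le_by /=; rewrite le_gtF.
Qed.

Lemma card_below_second_le1 (R : numDomainType) (I : finType) (f : I -> R)
    (s : seq R) : sorted <=%R s -> perm_eq [seq f i | i <- index_enum I] s ->
  (#|[pred i | (f i < nth 0 s 1)%R]| <= 1)%N.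
Proof.
move=> s_sorted fs; rewrite cardE /enum_mem size_filter.
by have := count_lt_second_sorted s_sorted; rewrite -(permP fs) count_map.
Qed.

Section Rayleigh.
Local Open Scope sesquilinear_scope.

Lemma spectral_diag_perm_eq (C : numClosedFieldType) n (A : 'M[C]_n) (s : seq C) :
  A \is normalmx -> char_poly A = \prod_(x <- s) ('X - x%:P) ->
  perm_eq [seq spectral_diag A 0 i | i <- index_enum 'I_n] s.
Proof.
move=> /orthomx_spectralP A_spectral charA; apply: prod_XsubC_eq.
rewrite big_map -charA [in RHS]A_spectral char_poly_conj ?spectral_unit //.
rewrite char_poly_trig ?diag_mx_is_trig //.
by apply: eq_bigr => i _; rewrite mxE eqxx mulr1n.
Qed.

Lemma diag_form_ge (C : numClosedFieldType) n (d z : 'rV[C]_n) (w : 'cV[C]_n)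
    (a : C) :
  0 < a -> d \is a realmx -> (#|[pred i | (d 0 i < a)%R]| <= 1)%N ->
  w != 0 -> diag_mx d *m w = 0 -> z *m w = 0 ->
  a * (z *m z^t*) 0 0 <= (z *m diag_mx d *m z^t*) 0 0.
Proof.
move=> a_gt0 /mxOverP d_real /card_le1_eqP below_eq w_neq0 dw0 zw0.
rewrite mul_mx_diag !mxE mulr_sumr; apply: ler_sum => i _; rewrite !mxE.
have [di_lt|] := boolP (d 0 i < a); last first.
  rewrite -real_leNgt ?d_real ?gtr0_real // => a_le.
  rewrite [X in _ <= X]mulrAC [X in X <= _]mulrC.
  by apply: ler_wpM2l => //; apply: mul_conjC_ge0.
(* d 0 i is the only entry below a, so w is supported on i and z *m w = 0
   forces z 0 i = 0 *)
have w_other j : j != i -> w j 0 = 0.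
  move=> ji; have /matrixP/(_ j 0) := dw0; rewrite mul_diag_mx !mxE.
  move/eqP; rewrite mulf_eq0 => /orP[/eqP dj0|/eqP //].
  by case/eqP: ji; apply: below_eq; rewrite // inE dj0.
have wi_neq0 : w i 0 != 0.
  apply: contraNneq w_neq0 => wi0; apply/eqP/matrixP => j k; rewrite ord1 mxE.
  by have [->|/w_other] := eqVneq j i.
have /matrixP/(_ 0 0) := zw0; rewrite !mxE (bigD1 i) //= big1 => [|j /w_other->];
  last by rewrite mulr0.
move/eqP; rewrite addr0 mulf_eq0 (negbTE wi_neq0) orbF => /eqP->.
by rewrite !(mul0r, mulr0).
Qed.

Lemma rayleigh_second_eigenvalue (R : rcfType) n (L : 'M[R]_n) (s : seq R)
    (u x : 'cV[R]_n) :
  L^T = L -> sorted_eigenvalues L s -> 0 < nth 0 s 1 ->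
  u != 0 -> L *m u = 0 -> x^T *m u = 0 ->
  nth 0 s 1 * (x^T *m x) 0 0 <= (x^T *m L *m x) 0 0.
Proof.
move=> LT [s_sorted charL] lam2_gt0 u_neq0 Lu0 xu0.
pose toC := real_complex R; set lam2 := nth 0 s 1.
set LC := map_mx toC L.
have LC_herm : LC \is hermsymmx.
  apply: realsym_hermsym.
    by apply/is_hermitianmxP; rewrite expr0 scale1r map_mx_id // map_trmx LT.
  by apply/mxOverP => i j; rewrite mxE; apply/complex_realP; exists (L i j).
have LC_normal := hermitian_normalmx LC_herm.
set P := spectralmx LC; set d := spectral_diag LC.
have /orthomx_spectralP LCE := LC_normal; rewrite -/P -/d in LCE.
have P_unit : P \in unitmx := spectral_unit LC.
have P_inv : invmx P = P^t* := invmx_unitary (spectral_unitarymx LC).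
have d_below : (#|[pred i | (d 0 i < toC lam2)%R]| <= 1)%N.
  have -> : toC lam2 = nth 0 (map toC s) 1.
    by rewrite /lam2; case: (s) => [|? [|? ?]] //=; rewrite rmorph0.
  apply: card_below_second_le1.
    by rewrite sorted_map; apply: sub_sorted s_sorted => a b; rewrite /= lecR.
  apply: spectral_diag_perm_eq => //.
  by rewrite -map_char_poly charL map_prod_XsubC big_map.
set xC := map_mx toC x.
have xC_conj : xC^T^t* = xC.
  by apply/matrixP => i j; rewrite !mxE; apply/CrealP/complex_realP; exists (x i j).
set z := xC^T *m P^t*; set w := P *m map_mx toC u.
have z_conj : z^t* = P *m xC.
  by rewrite /z trmx_mul map_mxM trmxCK xC_conj.
have w_neq0 : w != 0.
  apply: contraNneq u_neq0 => /(congr1 (mulmx (invmx P))).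
  by rewrite mulKmx // mulmx0 => /eqP; rewrite map_mx_eq0.
have dw0 : diag_mx d *m w = 0.
  have : LC *m map_mx toC u = 0 by rewrite -map_mxM Lu0 map_mx0.
  rewrite LCE => /(congr1 (mulmx P)).
  by rewrite /w !mulmxA mulmxV // mul1mx mulmx0.
have zw0 : z *m w = 0.
  rewrite /z /w mulmxA mulmxKtV ?spectral_unitarymx //.
  by rewrite map_trmx -map_mxM xu0 map_mx0.
have zz : z *m z^t* = map_mx toC (x^T *m x).
  by rewrite z_conj /z mulmxA mulmxKtV ?spectral_unitarymx // map_mxM map_trmx.
have zdz : z *m diag_mx d *m z^t* = map_mx toC (x^T *m L *m x).
  by rewrite z_conj /z -P_inv !map_mxM map_trmx -/LC LCE !mulmxA.
have := diag_form_ge _ (hermitian_spectral_diag_real LC_herm) d_below w_neq0 dw0 zw0.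
rewrite ltcR zz zdz => /(_ lam2_gt0).
by rewrite [X in _ * X]mxE [X in _ <= X]mxE -rmorphM lecR; apply.
Qed.

End Rayleigh.

Lemma sqnormE (R : comPzRingType) p (v : 'cV[R]_p) : sqnorm v = (v^T *m v) 0 0.
Proof. by rewrite /sqnorm mxE; apply: eq_bigr => i _; rewrite mxE expr2. Qed.

Lemma sqnorm_ge0 (R : realDomainType) p (v : 'cV[R]_p) : 0 <= sqnorm v.
Proof. by apply: sumr_ge0 => i _; apply: sqr_ge0. Qed.

Lemma sqnormDZ (R : comNzRingType) p (x a : 'cV[R]_p) mu :
  sqnorm (x + mu *: a) =
  sqnorm x + 2 * mu * \sum_i a i 0 * x i 0 + mu ^+ 2 * sqnorm a.
Proof.
by rewrite /sqnorm !mulr_sumr -!big_split; apply: eq_bigr => i _; rewrite /= !mxE; ring.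
Qed.

Lemma sqnorm_sub_mean (R : numFieldType) p (x : 'cV[R]_p) : (0 < p)%N ->
  sqnorm (x - ((\sum_i x i 0) / p%:R) *: const_mx 1) =
  sqnorm x - (\sum_i x i 0) ^+ 2 / p%:R.
Proof.
move=> p_gt0; set S := \sum_i x i 0.
have p_neq0 : p%:R != 0 :> R by rewrite pnatr_eq0 -lt0n.
rewrite /sqnorm (eq_bigr (fun i => x i 0 ^+ 2 - 2 * (S / p%:R) * x i 0 + (S / p%:R) ^+ 2));
  last by move=> i _; rewrite !mxE; ring.
rewrite big_split sumrB /= -mulr_sumr sumr_const card_ord -/S -mulr_natr.
by field.
Qed.

Section Incidence.
Variables (R : comPzRingType) (n m : nat) (E : 'I_m -> 'I_n * 'I_n).
Hypothesis E_loopfree : forall e, (E e).1 != (E e).2.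
Local Notation A := (incidence R E).

Lemma mul_incidence (x : 'cV[R]_n) e : (A *m x) e 0 = x (E e).1 0 - x (E e).2 0.
Proof.
rewrite mxE (bigD1 (E e).1) //= (bigD1 (E e).2) /=; last by rewrite eq_sym E_loopfree.
rewrite big1 => [|v /andP[v1 v2]]; last by rewrite mxE (negbTE v1) (negbTE v2) mul0r.
by rewrite !mxE eqxx eq_sym (negbTE (E_loopfree e)) eqxx addr0 mul1r mulN1r.
Qed.

Lemma incidence_const1 : A *m (const_mx 1 : 'cV[R]_n) = 0.
Proof. by apply/matrixP => e j; rewrite ord1 mul_incidence !mxE subrr. Qed.

Lemma sum_tr_incidence (y : 'cV[R]_m) : \sum_v (A^T *m y) v 0 = 0.
Proof.
have := congr1 (fun M => (M^T *m y) 0 0) incidence_const1.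
rewrite /= trmx0 mul0mx [RHS]mxE trmx_mul -mulmxA mxE => sum0.
by rewrite -[RHS]sum0; apply: eq_bigr => v _; rewrite !mxE mul1r.
Qed.

Lemma tr_incidence_unitv e v : (A^T *m unitv R e) v 0 = A e v.
Proof.
rewrite mxE (bigD1 e) //= big1 => [|f fe]; last by rewrite !mxE (negbTE fe) mulr0.
by rewrite !mxE eqxx mulr1 addr0.
Qed.

Lemma sqnorm_tr_incidence_unitv e : sqnorm (A^T *m unitv R e) = 2.
Proof.
rewrite /sqnorm (eq_bigr (fun v => A e v * (A^T *m unitv R e) v 0)) => [|v _];
  last by rewrite expr2 tr_incidence_unitv.
have := mul_incidence (A^T *m unitv R e) e; rewrite mxE => ->.
by rewrite !tr_incidence_unitv !mxE eqxx eq_sym (negbTE (E_loopfree e)) eqxx opprK.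
Qed.

End Incidence.

Section DualFunction.
Variables (R : realFieldType) (n m : nat) (E : 'I_m -> 'I_n * 'I_n).
Hypothesis E_loopfree : forall e, (E e).1 != (E e).2.
Variable c : 'cV[R]_n.
Local Notation A := (incidence R E).
Local Notation D := (Dual E c).

Definition primal (y : 'cV[R]_m) : 'cV[R]_n := c + A^T *m y.

Definition mean_value : R := (\sum_i c i 0) / n%:R.

Lemma Dual_primal y : D y = (sqnorm c - sqnorm (primal y)) / 2.
Proof.
have dot : ((A *m c)^T *m y) 0 0 = \sum_i (A^T *m y) i 0 * c i 0.
  by rewrite trmx_mul -mulmxA mxE; apply: eq_bigr => i _; rewrite !mxE mulrC.
rewrite /Dual /primal dot; have := sqnormDZ c (A^T *m y) 1; rewrite scale1r => ->.
by field.
Qed.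

Lemma primal_line y e mu :
  primal (y + mu *: unitv R e) = primal y + mu *: (A^T *m unitv R e).
Proof. by rewrite /primal mulmxDr scalemxAr addrA. Qed.

Lemma Dual_line_search y e :
  D (y + (- (A *m primal y) e 0 / 2) *: unitv R e) =
  D y + (A *m primal y) e 0 ^+ 2 / 4.
Proof.
rewrite !Dual_primal primal_line sqnormDZ sqnorm_tr_incidence_unitv //.
have -> : \sum_i (A^T *m unitv R e) i 0 * primal y i 0 = (A *m primal y) e 0.
  by rewrite [RHS]mxE; apply: eq_bigr => i _; rewrite tr_incidence_unitv.
by field.
Qed.

Lemma sum_primal y : \sum_v primal y v 0 = \sum_v c v 0.
Proof.
rewrite (eq_bigr (fun v => c v 0 + (A^T *m y) v 0)) => [|v _]; last by rewrite mxE.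
by rewrite big_split /= sum_tr_incidence // addr0.
Qed.

Lemma sum_primal_sub_mean y : (0 < n)%N ->
  \sum_v (primal y - mean_value *: const_mx 1) v 0 = 0.
Proof.
move=> n_gt0; rewrite (eq_bigr (fun v => primal y v 0 - mean_value)) => [|v _];
  last by rewrite !mxE mulr1.
rewrite sumrB sum_primal sumr_const card_ord -mulr_natr /mean_value divfK ?subrr //.
by rewrite pnatr_eq0 -lt0n.
Qed.

Lemma Dual_gap_le_centered y ys : (0 < n)%N ->
  2 * (D ys - D y) <= sqnorm (primal y - mean_value *: const_mx 1).
Proof.
move=> n_gt0; have := sqnorm_ge0 (primal ys - mean_value *: const_mx 1).
rewrite /mean_value -(sum_primal ys) sqnorm_sub_mean // sum_primal.
rewrite -(sum_primal y) sqnorm_sub_mean // sum_primal !Dual_primal.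
lra.
Qed.
End DualFunction.

Lemma sum_tuple0 (R : nmodType) (T : finType) (F : seq T -> R) :
  \sum_(t : 0.-tuple T) F t = F [::].
Proof. by rewrite (big_pred1 [tuple]) // => t; apply/esym/eqP; exact: tuple0. Qed.

Lemma sum_tuple_cons (R : nmodType) (T : finType) k (F : seq T -> R) :
  \sum_(t : k.+1.-tuple T) F t = \sum_(x : T) \sum_(t : k.-tuple T) F (x :: t).
Proof.
rewrite pair_bigA /= (reindex (fun p : T * k.-tuple T => [tuple of p.1 :: p.2])) /=.
  by apply: eq_bigr => -[].
exists (fun t => (thead t, [tuple of behead t])) => [[x t] _|t _]; first exact/congr1/val_inj.
by apply: val_inj; case/tupleP: t.
Qed.

Section GeometricDecay.
Variables (R : realFieldType) (T : finType) (G : seq T -> R) (q : R).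
Hypothesis G_ge0 : forall s, 0 <= G s.
Hypothesis G_step : forall s, \sum_x G (rcons s x) <= q * G s.

Lemma sum_tuples_geometric k : \sum_(t : k.-tuple T) G t <= q ^+ k * G [::].
Proof.
have [q_ge0|q_lt0] := leP 0 q; last first.
  (* a negative rate is only compatible with G = 0 *)
  have G0 s : G s = 0.
    have := G_step s; have := G_ge0 s.
    have : 0 <= \sum_x G (rcons s x) by apply: sumr_ge0.
    nra.
  by rewrite big1 ?G0 ?mulr0.
suff sum_cat s : \sum_(t : k.-tuple T) G (s ++ t) <= q ^+ k * G s.
  by have := sum_cat [::].
elim: k s => [|k IHk] s.
  by rewrite (sum_tuple0 (fun u => G (s ++ u))) cats0 expr0 mul1r.
rewrite (sum_tuple_cons _ (fun u => G (s ++ u))) exprSr -mulrA.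
apply: le_trans (ler_wpM2l (exprn_ge0 _ q_ge0) (G_step s)).
rewrite mulr_sumr; apply: ler_sum => x _.
by under eq_bigr => t _ do rewrite -cat_rcons; apply: IHk.
Qed.

End GeometricDecay.

Section Convergence.
Variables (R : rcfType) (n m : nat) (E : 'I_m -> 'I_n * 'I_n).
Hypothesis E_loopfree : forall e, (E e).1 != (E e).2.
Variables (c : 'cV[R]_n) (ystar : 'cV[R]_m).
Hypothesis ystar_max : forall y, Dual E c y <= Dual E c ystar.
Variable alpha : R.
Hypothesis alpha_lambda2 : algebraic_connectivity E alpha.
Hypothesis n_gt0 : (0 < n)%N.
Local Notation A := (incidence R E).
Local Notation D := (Dual E c).

Lemma Dual_gap_le_edge_sum y :
  2 * alpha * (D ystar - D y) <= sqnorm (A *m primal E c y).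
Proof.
have gap_ge0 : 0 <= D ystar - D y by rewrite subr_ge0.
have [alpha_gt0|alpha_le0] := ltP 0 alpha; last first.
  by have := sqnorm_ge0 (A *m primal E c y); nra.
case: alpha_lambda2 => s [s_eig alpha_def].
set x := primal E c y - mean_value c *: const_mx 1.
have L_sym : (laplacian R E)^T = laplacian R E by rewrite /laplacian trmx_mul trmxK.
have L1 : laplacian R E *m (const_mx 1 : 'cV[R]_n) = 0.
  by rewrite /laplacian -mulmxA incidence_const1 // mulmx0.
have one_neq0 : const_mx 1 != 0 :> 'cV[R]_n.
  by apply/eqP => /matrixP/(_ (Ordinal n_gt0) 0) /eqP; rewrite !mxE oner_eq0.
have x_perp : x^T *m (const_mx 1 : 'cV[R]_n) = 0.
  apply/matrixP => i j; rewrite !ord1 [RHS]mxE -(sum_primal_sub_mean E_loopfree c y n_gt0).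
  by rewrite mxE; apply: eq_bigr => v _; rewrite !mxE mulr1.
have Ax : A *m x = A *m primal E c y.
  by rewrite mulmxBr -scalemxAr incidence_const1 // scaler0 subr0.
have := rayleigh_second_eigenvalue L_sym s_eig _ one_neq0 L1 x_perp.
rewrite -alpha_def -sqnormE /laplacian !mulmxA -trmx_mul -mulmxA -sqnormE Ax.
move=> /(_ alpha_gt0); apply: le_trans.
by rewrite -mulrA mulrCA ler_pM2l //; apply: Dual_gap_le_centered.
Qed.

Lemma rcd_expected_step Y : rcd_iterates E c Y -> forall s,
  \sum_e (D ystar - D (Y (rcons s e))) <= (m%:R - alpha / 2) * (D ystar - D (Y s)).
Proof.
case=> _ Y_step s; pose g e := (A *m primal E c (Y s)) e 0.
apply: le_trans (_ : \sum_e (D ystar - D (Y s) - g e ^+ 2 / 4) <= _).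
  apply: ler_sum => e _; have [lam [-> lam_max]] := Y_step s e.
  by have := lam_max (- g e / 2); rewrite Dual_line_search // /g; lra.
rewrite sumrB sumr_const card_ord -mulr_suml -mulr_natr.
by have := Dual_gap_le_edge_sum (Y s); rewrite /sqnorm -/g; nra.
Qed.

End Convergence.

Theorem mainTheorem17 (R : rcfType) (n m : nat) (E : 'I_m -> 'I_n * 'I_n)
  (hn : (2 <= n)%N) (hsimple : simple_graph E) (hconn : connected_graph E)
  (alpha : R) (halpha : algebraic_connectivity E alpha)
  (c : 'cV[R]_n) (ystar : 'cV[R]_m)
  (hystar : forall y : 'cV[R]_m, Dual E c y <= Dual E c ystar)
  (Y : seq 'I_m -> 'cV[R]_m) (hY : rcd_iterates E c Y) (k : nat) :
  (m%:R ^+ k)^-1 * \sum_(s : k.-tuple 'I_m) (Dual E c ystar - Dual E c (Y s))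
    <= (1 - alpha / (2 * m%:R)) ^+ k * (Dual E c ystar - Dual E c 0).
Proof.
have E_loopfree e : (E e).1 != (E e).2 by apply/eqP; apply: hsimple.1.
have n_gt0 : (0 < n)%N by apply: leq_trans hn.
pose G s := Dual E c ystar - Dual E c (Y s).
have G_ge0 s : 0 <= G s by rewrite subr_ge0.
have decay := sum_tuples_geometric G_ge0 (rcd_expected_step E_loopfree hystar halpha n_gt0 hY) k.
have -> : Dual E c 0 = Dual E c (Y [::]) by case: hY => ->.
have [m0|m_gt0] := posnP m.
  (* no edges: alpha / (2 * 0) = 0, and for k > 0 there are no edge sequences *)
  subst m; case: k decay => [|k] _; first by rewrite !expr0 invr1 !mul1r (sum_tuple0 G).
  rewrite (sum_tuple_cons _ G) big_ord0 mulr0 mulr0 invr0 mulr0 subr0 expr1n mul1r.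
  exact: G_ge0.
rewrite ler_pdivrMl ?exprn_gt0 ?ltr0n // mulrA -exprMn.
have -> : m%:R * (1 - alpha / (2 * m%:R)) = m%:R - alpha / 2.
  by field; rewrite pnatr_eq0 -lt0n.
exact: decay.
Qed.
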